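(* For all $G,H\subseteq A$ and every $\varphi\in\mathcal{L}_{CoRGAL}$, the formula $\langle[G]\rangle\langle[H]\rangle\varphi\rightarrow[\langle A\setminus(G\cup H)\rangle]\varphi$ is valid.
   Context: Fix a finite set $A$ of agents and a countable set $P$ of propositional variables. The language $\mathcal{L}_{CoRGAL}$ is given by $\varphi ::= p \mid \neg\varphi \mid (\varphi\wedge\varphi) \mid K_a\varphi \mid [\varphi]\varphi \mid [G,\varphi]\varphi \mid [\langle G\rangle]\varphi$ with $p\in P$, $a\in A$, $G\subseteq A$. $\mathcal{L}_{EL}$ is the fragment built only from $p,\neg,\wedge,K_a$. Duals: $\langle\psi\rangle\varphi:=\neg[\psi]\neg\varphi$, $\langle[G]\rangle\varphi:=\neg[\langle G\rangle]\neg\varphi$. For $G\subseteq A$, $\mathcal{L}^G_{EL}$ is the set of formulas $\bigwedge_{i\in G}K_i\varphi_i$ with each $\varphi_i\in\mathcal{L}_{EL}$; $\psi_G,\chi_G$ range over $\mathcal{L}^G_{EL}$. Epistemic models $M=(W,\sim,V)$: $W\neq\emptyset$, each $\sim_a$ an equivalence relation, $V:P\to\mathcal{P}(W)$; $M^\varphi$ is the restriction of $M$ to $\{v:(M,v)\models\varphi\}$. Semantics: standard for $p,\neg,\wedge,K_a$; $(M,w)\models[\varphi]\psi$ iff $(M,w)\models\varphi$ implies $(M^\varphi,w)\models\psi$; $(M,w)\models[G,\chi]\varphi$ iff $(M,w)\models\chi$ and for all $\psi_G$, $(M,w)\models[\psi_G\wedge\chi]\varphi$; $(M,w)\models[\langle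 G\rangle]\varphi$ iff for every $\psi_G$ there is $\chi_{A\setminus G}$ with $(M,w)\models\psi_G\to\langle\psi_G\wedge\chi_{A\setminus G}\rangle\varphi$. Thus $(M,w)\models\langle[G]\rangle\varphi$ iff there is $\psi_G$ such that for all $\chi_{A\setminus G}$, $(M,w)\models\psi_G\wedge[\psi_G\wedge\chi_{A\setminus G}]\varphi$. A formula is valid if true at every pointed model. *)

From mathcomp Require Import all_boot.
Set Implicit Arguments. Unset Strict Implicit. Unset Printing Implicit Defensive.

Section CoRGAL.
Variable A : finType.

Inductive elform : Type :=
| EVar : nat -> elform
| ENot : elform -> elform
| EAnd : elform -> elform -> elform
| EK   : A -> elform -> elform.

Inductive form : Type :=
| Var  : nat -> form
| Not  : form -> form
| And  : form -> form -> form
| K    : A -> form -> form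
| Ann  : form -> form -> form
| RGA  : {set A} -> form -> form -> form
| Coal : {set A} -> form -> form.

Fixpoint emb (f : elform) : form :=
  match f with
  | EVar p => Var p | ENot f => Not (emb f) | EAnd f g => And (emb f) (emb g)
  | EK a f => K a (emb f)
  end.

Definition ETop : elform := ENot (EAnd (EVar 0) (ENot (EVar 0))).

Definition conjK (G : {set A}) (phis : A -> elform) : elform :=
  match enum G with
  | [::] => ETop
  | i :: s => foldl (fun acc j => EAnd acc (EK j (phis j))) (EK i (phis i)) s
  end.

Record model : Type := Model {
  W : Type;
  W_inh : inhabited W;
  rel : A -> W -> W -> Prop;
  val : nat -> W -> Prop;
  rel_refl : forall a w, rel a w w;
  rel_sym : forall a w v, rel a w v -> rel a v w;
  rel_trans : forall a u v w, rel a u v -> rel a v w -> rel a u w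
}.

(* Satisfaction in the submodel of M with domain D (restrictions M^phi are
   represented by their sets of worlds). *)
Fixpoint satEL (M : model) (D : W M -> Prop) (w : W M) (f : elform) : Prop :=
  match f with
  | EVar p => val p w
  | ENot f => ~ satEL D w f
  | EAnd f g => satEL D w f /\ satEL D w g
  | EK a f => forall v, D v -> rel a w v -> satEL D v f
  end.

Fixpoint sat (M : model) (D : W M -> Prop) (w : W M) (f : form) : Prop :=
  match f with
  | Var p => val p w
  | Not f => ~ sat D w f
  | And f g => sat D w f /\ sat D w g
  | K a f => forall v, D v -> rel a w v -> sat D v f
  | Ann f g => sat D w f -> sat (fun v => D v /\ sat D v f) w g
  | RGA G chi f =>
      sat D w chi /\
      forall phis : A -> elform,
        let psi := conjK G phis in
        (satEL D w psi /\ sat D w chi) ->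
        sat (fun v => D v /\ (satEL D v psi /\ sat D v chi)) w f
  | Coal G f =>
      forall phis : A -> elform,
        let psi := conjK G phis in
        exists chis : A -> elform,
          let chi := conjK (~: G) chis in
          satEL D w psi ->
          (satEL D w psi /\ satEL D w chi) /\
          sat (fun v => D v /\ (satEL D v psi /\ satEL D v chi)) w f
  end.

Definition Imp (f g : form) : form := Not (And f (Not g)).
(* <[G]> phi := ~ [<G>] ~ phi *)
Definition DiaCoal (G : {set A}) (f : form) : form := Not (Coal G (Not f)).

Definition valid (f : form) : Prop :=
  forall (M : model) (w : W M), sat (fun _ => True) w f.

Lemma sat_emb (M : model) (D : W M -> Prop) (w : W M) (f : elform) :
  sat D w (emb f) <-> satEL D w f.
Proof.
elim: f w => [p|f IH|f IHf g IHg|a f IH] w /=.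
- by [].
- by split=> H1 H2; apply: H1; apply/IH.
- by split=> -[H1 H2]; split; [apply/IHf|apply/IHg|apply/IHf|apply/IHg].
- by split=> H v Dv Rv; apply/IH; apply: H.
Qed.

End CoRGAL.

(** Let [psi_G] witness the outer diamond and let the agents outside
    [G :|: H] announce [psi].  Then [A :\: G] may reply by repeating [psi]
    (padded with tautologies on [H]); in the updated model the inner diamond
    yields a witness [psi_H].  The two successive updates, by [psi_G /\ psi]
    and then by [psi_H], amount to the single update by [psi /\ chi], where
    [chi] conjoins over [G :|: H] the knowledge of [psi_G] with that of
    [psi_H] relativised to [psi_G /\ psi].  So [chi] is the required reply
    of [G :|: H] to [psi]. *)
From Stdlib Require Import Classical FunctionalExtensionality PropExtensionality.
From mathcomp Require Import all_boot.
Set Implicit Arguments. Unset Strict Implicit. Unset Printing Implicit Defensive.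

Section Announcements.
Variable A : finType.
Variable M : model A.
Implicit Types (D : W M -> Prop) (w : W M) (G H : {set A}) (d f : elform A).

Lemma satEL_foldl_K D w (phis : A -> elform A) (s : seq A) acc :
  satEL D w (foldl (fun acc j => EAnd acc (EK j (phis j))) acc s) <->
  satEL D w acc /\ forall i, i \in s -> satEL D w (EK i (phis i)).
Proof.
elim: s acc => [|j s IH] acc /=; first by split=> [|[]].
rewrite IH /=; split=> [[[Hacc Hj] Hs]|[Hacc Hs]].
  by split=> // i; rewrite in_cons => /predU1P[->|/Hs].
split; first by split=> //; apply: Hs; rewrite mem_head.
by move=> i Hi; apply: Hs; rewrite in_cons Hi orbT.
Qed.

Lemma satEL_ETop D w : satEL D w (ETop A).
Proof. by case. Qed.

Lemma satEL_conjK D w G phis :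
  satEL D w (conjK G phis) <-> forall i, i \in G -> satEL D w (EK i (phis i)).
Proof.
rewrite /conjK; have memG i : (i \in G) = (i \in enum G) by rewrite mem_enum.
case: (enum G) memG => [|j s] memG.
  by split=> [_ i|_]; [rewrite memG | exact: satEL_ETop].
rewrite satEL_foldl_K; split=> [[Hj Hs] i|HG].
  by rewrite memG in_cons => /predU1P[->|/Hs].
split=> [|i Hi]; apply: HG; rewrite memG ?mem_head //.
by rewrite in_cons Hi orbT.
Qed.

Lemma satEL_conjK_ETop D w G : satEL D w (conjK G (fun _ => ETop A)).
Proof. by apply/satEL_conjK => i _ v _ _; apply: satEL_ETop. Qed.

Lemma satEL_conjK_pad D w (B C : {set A}) phis :
  satEL D w (conjK C (fun i => if i \in B then ETop A else phis i)) <->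
  satEL D w (conjK (C :\: B) phis).
Proof.
rewrite !satEL_conjK; split=> HC i Hi.
  by case/setDP: Hi => HiC /negbTE HiB; have := HC i HiC; rewrite HiB.
case: ifP => HiB; first by move=> v _ _; apply: satEL_ETop.
by apply: HC; rewrite inE HiB.
Qed.

Definition EImp d f : elform A := ENot (EAnd d (ENot f)).

Fixpoint relativize d f : elform A :=
  match f with
  | EVar p => EVar A p
  | ENot f => ENot (relativize d f)
  | EAnd f g => EAnd (relativize d f) (relativize d g)
  | EK a f => EK a (EImp d (relativize d f))
  end.

Lemma satEL_relativize D d f w :
  satEL (fun v => D v /\ satEL D v d) w f <-> satEL D w (relativize d f).
Proof.
elim: f w => [p|f IH|f IHf g IHg|a f IH] w /=.
- by [].
- by rewrite IH.
- by rewrite IHf IHg.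
- split=> [Hf v Dv Rv [Hd]|Hf v [Dv Hd] Rv]; first by apply; apply/IH; apply: Hf.
  by apply/IH; apply: NNPP => Hn; apply: (Hf v Dv Rv).
Qed.

Definition join_announcement G H (phisG : A -> elform A) d
    (phisH : A -> elform A) (i : A) : elform A :=
  EAnd (if i \in G then phisG i else ETop A)
       (if i \in H then EImp d (relativize d (phisH i)) else ETop A).

Lemma satEL_conjK_join D w G H phisG d phisH :
  satEL D w (conjK (G :|: H) (join_announcement G H phisG d phisH)) <->
  satEL D w (conjK G phisG) /\
  satEL (fun v => D v /\ satEL D v d) w (conjK H phisH).
Proof.
rewrite !satEL_conjK /join_announcement; split=> [HGH|[HG HH] i Hi v Dv Rv].
  split=> i Hi; last apply/(satEL_relativize D d (EK i (phisH i))).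
    have HiGH : i \in G :|: H by rewrite inE Hi.
    by move=> v Dv Rv; have [] := HGH i HiGH v Dv Rv; rewrite Hi.
  have HiGH : i \in G :|: H by rewrite inE Hi orbT.
  by move=> v Dv Rv; have [_] := HGH i HiGH v Dv Rv; rewrite Hi.
split; case: ifP => Hi'; try exact: satEL_ETop; first exact: HG i Hi' v Dv Rv.
exact: (satEL_relativize D d (EK i (phisH i)) w).1 (HH i Hi') v Dv Rv.
Qed.

Lemma sat_domain_equiv D D' w (f : form A) :
  (forall v, D v <-> D' v) -> sat D w f -> sat D' w f.
Proof.
move=> DD'; have -> // : D = D'.
by apply: functional_extensionality => v; apply: propositional_extensionality.
Qed.

Lemma sat_DiaCoal D w G (f : form A) :
  sat D w (DiaCoal G f) ->
  exists phis, satEL D w (conjK G phis) /\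
    forall chis, satEL D w (conjK (~: G) chis) ->
      sat (fun v => D v /\ (satEL D v (conjK G phis) /\
                            satEL D v (conjK (~: G) chis))) w f.
Proof.
move=> /= /not_all_ex_not [phis /= Hphis]; exists phis.
have Hchis chis := not_ex_all_not _ _ Hphis chis.
have Hpsi : satEL D w (conjK G phis).
  by apply: NNPP => Hn; apply: (Hchis (fun _ => ETop A)) => /Hn.
split=> // chis Hchi; apply: NNPP => Hn; apply: (Hchis chis) => _.
by split.
Qed.

Lemma sat_DiaCoal_DiaCoal D w G H (phi : form A) :
  sat D w (DiaCoal G (DiaCoal H phi)) -> sat D w (Coal (~: (G :|: H)) phi).
Proof.
move=> /sat_DiaCoal [phisG [HpsiG HG]] phis /=.
set psi := conjK (~: (G :|: H)) phis.
have [Hpsi|] := classic (satEL D w psi); last by exists phis.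
pose chi1 := conjK (~: G) (fun i => if i \in G :|: H then ETop A else phis i).
have chi1E v : satEL D v chi1 <-> satEL D v psi.
  by rewrite satEL_conjK_pad setDE setCU setIA setIid -setCU.
have /sat_DiaCoal [phisH [HpsiH HH]] := HG _ ((chi1E w).2 Hpsi).
have Hphi := HH _ (satEL_conjK_ETop _ w (~: H)).
pose d := EAnd (conjK G phisG) chi1.
exists (join_announcement G H phisG d phisH); rewrite setCK => _.
have chiE := satEL_conjK_join D _ G H phisG d phisH.
split; first by split=> //; apply/chiE.
apply: sat_domain_equiv Hphi => v; rewrite chiE /= chi1E.
split=> [[[Dv [Hg Hp]] [Hh _]]|[Dv [Hp [Hg Hh]]]] //.
by do 2!split=> //; apply: satEL_conjK_ETop.
Qed.

End Announcements.

Theorem mainTheorem6 (A : finType) (G H : {set A}) (phi : form A) :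
  valid (Imp (DiaCoal G (DiaCoal H phi)) (Coal (~: (G :|: H)) phi)).
Proof. by move=> M w /= [/sat_DiaCoal_DiaCoal HCoal []]. Qed.
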